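(* Let $\sigma_{10}=\frac{1+\sqrt5}{2}$. For $p\in\{4,5,10\}$, the group $\Gamma=\mathcal{S}(p,\sigma_{10})$ is generated by $\mathrm{Stab}_\Gamma(m(R_1))\cup\mathrm{Stab}_\Gamma(m(A))$ where $A$ is either $(R_1R_2)^5$ or $(R_1R_3)^5$. For $p=10$, $\Gamma$ is also generated by $\mathrm{Stab}_\Gamma(m(R_1))\cup\mathrm{Stab}_\Gamma(m(A))$ where $A$ is either $(R_1R_2R_3R_2^{-1})^3$ or $(R_1R_3^{-1}R_2R_3)^3$.
   Context: Let $p\ge2$ be an integer and $\tau\in\mathbb{C}$. Set $u=e^{2\pi i/(3p)}$, $\alpha=2-u^3-\bar u^3$, $\beta=(\bar u^2-u)\tau$ and $H=\begin{pmatrix}\alpha&\beta&\bar\beta\\ \bar\beta&\alpha&\beta\\ \beta&\bar\beta&\alpha\end{pmatrix}$, a Hermitian matrix (of signature $(2,1)$ for the parameters considered) defining the form $\langle X,Y\rangle=Y^*HX$. Let $R_1=\begin{pmatrix}u^2&\tau&-u\bar\tau\\0&\bar u&0\\0&0&\bar u\end{pmatrix}$, $J=\begin{pmatrix}0&0&1\\1&0&0\\0&1&0\end{pmatrix}$, $R_2=JR_1J^{-1}$, $R_3=JR_2J^{-1}$. The group $\mathcal{S}(p,\tau)$ is the subgroup of $U(H)$ generated by $R_1$ and $J$, acting on $H^2_{\mathbb{C}}=\{[X]:\langle X,X\rangle<0\}$ through its image in $PU(H)$; all statements refer to this image. The elements $R_1$ and the listed $A$ are complex reflections (non-identity elements fixing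 pointwise a complex line) in the relevant groups; $m(A)$ denotes the mirror (fixed complex line) of $A$, and $\mathrm{Stab}_\Gamma(m)$ is the setwise stabilizer of $m$ in $\Gamma$. *)

(* complex numbers are algC (algebraic complex numbers);
   all quantities in the statement are algebraic. *)
From HB Require Import structures.
From mathcomp Require Import all_boot all_order all_algebra all_field.
Set Implicit Arguments. Unset Strict Implicit. Unset Printing Implicit Defensive.
Import Order.TTheory GRing.Theory Num.Theory.
Local Open Scope ring_scope.

Definition mx3 (a b c d e f g h k : algC) : 'M[algC]_3 :=
  \matrix_(i < 3, j < 3)
    nth 0 (nth [::] [:: [:: a; b; c]; [:: d; e; f]; [:: g; h; k]] i) j.

(* u = exp(2 pi i/(3p)) ; (3p).-root (-1) = exp(i pi /(3p)) *)
Definition uu (p : nat) : algC := ((3 * p)%N.-root (-1)) ^+ 2.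
Definition ub (p : nat) : algC := (uu p)^*.

Definition alpha (p : nat) : algC := 2 - (uu p) ^+ 3 - (ub p) ^+ 3.
Definition beta (p : nat) (tau : algC) : algC := ((ub p) ^+ 2 - uu p) * tau.

Definition Hmat (p : nat) (tau : algC) : 'M[algC]_3 :=
  let a := alpha p in let b := beta p tau in
  mx3 a b b^* b^* a b b b^* a.

Definition hform (p : nat) (tau : algC) (X Y : 'cV[algC]_3) : algC :=
  ((map_mx (fun z : algC => z^*) Y)^T *m Hmat p tau *m X) ord0 ord0.

Definition R1 (p : nat) (tau : algC) : 'M[algC]_3 :=
  mx3 ((uu p) ^+ 2) tau (- (uu p) * tau^*)
      0 (ub p) 0
      0 0 (ub p).

Definition Jm : 'M[algC]_3 := mx3 0 0 1 1 0 0 0 1 0.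

Definition R2 (p : nat) (tau : algC) : 'M[algC]_3 := Jm *m R1 p tau *m invmx Jm.
Definition R3 (p : nat) (tau : algC) : 'M[algC]_3 := Jm *m R2 p tau *m invmx Jm.

Inductive gen (S : 'M[algC]_3 -> Prop) : 'M[algC]_3 -> Prop :=
| gen_one : gen S 1%:M
| gen_in g : S g -> gen S g
| gen_mul g h : gen S g -> gen S h -> gen S (g *m h)
| gen_inv g : gen S g -> gen S (invmx g).

Definition Gam (p : nat) (tau : algC) : 'M[algC]_3 -> Prop :=
  gen (fun g => g = R1 p tau \/ g = Jm).

(* negative vectors, i.e. representatives of points of H^2_C *)
Definition negv (p : nat) (tau : algC) (X : 'cV[algC]_3) : Prop :=
  hform p tau X X < 0.

(* mirror of A: the set of points of H^2_C fixed by A (as a cone of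
   negative vectors): [X] is fixed by A in PU(H) iff A X = lambda X *)
Definition mirror (p : nat) (tau : algC) (A : 'M[algC]_3) : 'cV[algC]_3 -> Prop :=
  fun X => negv p tau X /\ exists l : algC, A *m X = l *: X.

Definition Stab (p : nat) (tau : algC) (m : 'cV[algC]_3 -> Prop) : 'M[algC]_3 -> Prop :=
  fun g => Gam p tau g /\ forall X : 'cV[algC]_3, m X <-> m (g *m X).

(* In PU(H): the image of Gamma is generated by the image of S.
   Since S is a subset of Gamma, this means: every element of Gamma is,
   up to a nonzero scalar, a word in S (and words in S lie in Gamma). *)
Definition generated_PU (p : nat) (tau : algC) (S : 'M[algC]_3 -> Prop) : Prop :=
  (forall g, gen S g -> Gam p tau g) /\
  (forall g, Gam p tau g -> exists d c, gen S d /\ c != 0 /\ g = c *: d).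

Definition gen_by_mirror_stabs (p : nat) (tau : algC) (A : 'M[algC]_3) : Prop :=
  generated_PU p tau
    (fun g => Stab p tau (mirror p tau (R1 p tau)) g \/ Stab p tau (mirror p tau A) g).

Definition sigma10 : algC := (1 + sqrtC 5) / 2.

(* Every element of Gamma commuting with a complex reflection preserves its mirror,
   and R1 preserves its own; so it suffices to write J, up to a scalar, as a product of
   elements of Gamma each of which commutes with R1 or with A.  Such words are given
   explicitly and the identities are verified by computation: with r a primitive 6p-th
   root of unity, u = r^2, the entries of R1, J and H are polynomials in r over Z[phi],
   phi the golden ratio, and are multiplied modulo r^(3p) = -1.  For p = 4 and 5 the
   identities already hold in Z[phi][x]/(x^(3p) + 1).  For p = 10 one needs
   phi = 1 + r^12 - r^18, valid for r = e^(i pi/30) only, and the identities hold after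
   multiplication by (1 + r^2)(1 + r^6)(1 + r^10), which kills the factors of x^30 + 1
   other than the 60th cyclotomic polynomial; the principal root 30.-root (-1) is
   identified with e^(i pi/30) by estimates on its real part. *)

From Stdlib Require Import BinNums.
From HB Require Import structures.
From mathcomp Require Import all_boot all_order all_algebra all_field.
From mathcomp Require Import ssrZ ring.
Import Order.TTheory GRing.Theory Num.Theory.
Local Open Scope ring_scope.
Set Implicit Arguments. Unset Strict Implicit. Unset Printing Implicit Defensive.

(** * Mirror stabilizers *)

Definition adjmx m n (M : 'M[algC]_(m, n)) : 'M[algC]_(n, m) :=
  (map_mx (fun z : algC => z^*) M)^T.

Lemma adjmx_mul m n k (M : 'M[algC]_(m, n)) (N : 'M[algC]_(n, k)) :
  adjmx (M *m N) = adjmx N *m adjmx M.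
Proof. by rewrite /adjmx -trmx_mul (map_mxM Num.conj). Qed.

Lemma adjmx1 n : adjmx (1%:M : 'M[algC]_n) = 1%:M.
Proof. by rewrite /adjmx (map_mx1 Num.conj) trmx1. Qed.

Section MirrorStabilizers.
Variables (p : nat) (tau : algC).
Local Notation H := (Hmat p tau).

Definition H_unitary (g : 'M[algC]_3) := adjmx g *m H *m g = H /\ g \in unitmx.

Lemma H_unitary1 : H_unitary 1%:M.
Proof. by rewrite /H_unitary adjmx1 mul1mx mulmx1 unitmx1. Qed.

Lemma H_unitaryM g h : H_unitary g -> H_unitary h -> H_unitary (g *m h).
Proof.
move=> [Hg ug] [Hh uh]; split; last by rewrite unitmx_mul ug uh.
by rewrite adjmx_mul -{2}Hh -{2}Hg !mulmxA.
Qed.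

Lemma H_unitaryV g : H_unitary g -> H_unitary (invmx g).
Proof.
move=> [Hg ug]; split; last by rewrite unitmx_inv.
by rewrite -{1}Hg !mulmxA -adjmx_mul mulmxV // adjmx1 mul1mx -mulmxA mulmxV // mulmx1.
Qed.

Hypotheses (R1_unitary : H_unitary (R1 p tau)) (J_unitary : H_unitary Jm).

Lemma Gam_H_unitary g : Gam p tau g -> H_unitary g.
Proof.
elim=> [|_ [->|->] | a b _ Ha _ Hb | a _ Ha] //.
- exact: H_unitary1.
- exact: H_unitaryM.
- exact: H_unitaryV.
Qed.

Lemma hform_H_unitary g X : H_unitary g -> hform p tau (g *m X) (g *m X) = hform p tau X X.
Proof. by move=> [Hg _]; rewrite /hform -/(adjmx _) adjmx_mul -[in RHS]Hg !mulmxA. Qed.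

Lemma Stab_mirror_commute A g :
  Gam p tau g -> g *m A = A *m g -> Stab p tau (mirror p tau A) g.
Proof.
move=> Gg gA; have [Hg ug] := Gam_H_unitary Gg.
split=> // X; rewrite /mirror /negv hform_H_unitary //.
split=> -[negX [l AX]]; split=> //; exists l.
- by rewrite mulmxA -gA -mulmxA AX scalemxAr.
- by apply: (can_inj (mulKmx ug)); rewrite -scalemxAr -AX !mulmxA gA.
Qed.

Definition mirror_stabs A g :=
  Stab p tau (mirror p tau (R1 p tau)) g \/ Stab p tau (mirror p tau A) g.

Lemma gen_by_mirror_stabs_of_J_factorization A (ws : seq 'M[algC]_3) c :
  (forall w, w \in ws -> Gam p tau w) ->
  (forall w, w \in ws -> w *m R1 p tau = R1 p tau *m w \/ w *m A = A *m w) ->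
  c != 0 -> Jm = c *: foldr mulmx 1%:M ws ->
  gen_by_mirror_stabs p tau A.
Proof.
move=> Gws Cws c0 Jws.
have genS_Gam g : gen (mirror_stabs A) g -> Gam p tau g.
  elim=> [|_ [[]|[]] // | a b _ Ga _ Gb | a _ Ga].
  - exact: gen_one.
  - exact: gen_mul.
  - exact: gen_inv.
have genS_ws : gen (mirror_stabs A) (foldr mulmx 1%:M ws).
  elim: ws Gws Cws {Jws} => [|w ws IH] Gws Cws /=; first exact: gen_one.
  apply: gen_mul; last by apply: IH => v v_ws; [apply: Gws | apply: Cws];
    rewrite inE v_ws orbT.
  apply: gen_in; have w_ws : w \in w :: ws by rewrite inE eqxx.
  by case: (Cws w w_ws) => Cw; [left | right]; apply: Stab_mirror_commute => //; apply: Gws.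
split=> // g; elim=> [|_ [->|->] | a b _ [da [ca [Sda [ca0 ->]]]] _ [db [cb [Sdb [cb0 ->]]]]
                     | a _ [da [ca [Sda [ca0 ->]]]]].
- by exists 1%:M, 1; rewrite scale1r oner_eq0; split=> //; apply: gen_one.
- exists (R1 p tau), 1; rewrite scale1r oner_eq0; split=> //; apply/gen_in; left.
  by apply: Stab_mirror_commute => //; apply/gen_in; left.
- by exists (foldr mulmx 1%:M ws), c.
- exists (da *m db), (ca * cb); split; first exact: gen_mul.
  by rewrite mulf_neq0 // -scalemxAl -scalemxAr scalerA.
- have [_ uda] := Gam_H_unitary (genS_Gam _ Sda).
  exists (invmx da), ca^-1; split; first exact: gen_inv.
  by rewrite invr_eq0 ca0 invmxZ // unitmxZ ?unitfE.
Qed.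

End MirrorStabilizers.

Lemma mx3_mul (a b c d e f g h k a' b' c' d' e' f' g' h' k' : algC) :
  mx3 a b c d e f g h k *m mx3 a' b' c' d' e' f' g' h' k' =
  mx3 (a * a' + b * d' + c * g') (a * b' + b * e' + c * h') (a * c' + b * f' + c * k')
      (d * a' + e * d' + f * g') (d * b' + e * e' + f * h') (d * c' + e * f' + f * k')
      (g * a' + h * d' + k * g') (g * b' + h * e' + k * h') (g * c' + h * f' + k * k').
Proof.
apply/matrixP => i j; rewrite !mxE !big_ord_recl big_ord0 !mxE /=.
by case: i => [[|[|[|?]]] ?]; case: j => [[|[|[|?]]] ?] //=; rewrite addr0 addrA.
Qed.

Lemma mx3_1 : mx3 1 0 0 0 1 0 0 0 1 = 1%:M.
Proof.
by apply/matrixP => i j; rewrite !mxE; case: i => [[|[|[|?]]] ?]; case: j => [[|[|[|?]]] ?].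
Qed.

Lemma adjmx_mx3 (a b c d e f g h k : algC) :
  adjmx (mx3 a b c d e f g h k) = mx3 a^* d^* g^* b^* e^* h^* c^* f^* k^*.
Proof.
by apply/matrixP => i j; rewrite !mxE; case: i => [[|[|[|?]]] ?]; case: j => [[|[|[|?]]] ?].
Qed.

Lemma scale_mx3 (s a b c d e f g h k : algC) :
  s *: mx3 a b c d e f g h k =
  mx3 (s * a) (s * b) (s * c) (s * d) (s * e) (s * f) (s * g) (s * h) (s * k).
Proof.
by apply/matrixP => i j; rewrite !mxE; case: i => [[|[|[|?]]] ?]; case: j => [[|[|[|?]]] ?].
Qed.

Lemma invmx_mulmx1 n (A B : 'M[algC]_n) : A *m B = 1%:M -> invmx A = B.
Proof.
move=> AB; have [uA _] := mulmx1_unit AB.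
by rewrite -[B](mulKmx uA) AB mulmx1.
Qed.

Lemma invmx_conj n (P X : 'M[algC]_n) :
  P \in unitmx -> invmx (P *m X *m invmx P) = P *m invmx X *m invmx P.
Proof.
move=> uP; have [uX | nuX] := boolP (X \in unitmx).
  apply: invmx_mulmx1.
  by rewrite !mulmxA mulmxKV // -(mulmxA _ X) mulmxV // mulmx1 mulmxV.
rewrite [invmx X]invmx_out // [LHS]invmx_out // inE.
by rewrite !unitmx_mul unitmx_inv uP andbT.
Qed.

Lemma Jm_mulmx : Jm *m mx3 0 1 0 0 0 1 1 0 0 = 1%:M.
Proof. by rewrite mx3_mul -mx3_1; congr mx3; ring. Qed.

Lemma invmx_Jm : invmx Jm = mx3 0 1 0 0 0 1 1 0 0.
Proof. exact: invmx_mulmx1 Jm_mulmx. Qed.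

Lemma Jm_unit : Jm \in unitmx.
Proof. exact: (mulmx1_unit Jm_mulmx).1. Qed.

Inductive letter := lR1 | lR1inv | lJ | lJinv.

Definition letter_index (l : letter) : nat :=
  match l with lR1 => 0 | lR1inv => 1 | lJ => 2 | lJinv => 3 end.
Definition index_letter (i : nat) : letter := nth lJinv [:: lR1; lR1inv; lJ] i.
Lemma letter_indexK : cancel letter_index index_letter. Proof. by case. Qed.
HB.instance Definition _ := Equality.copy letter (can_type letter_indexK).

Section Words.
Variables (p : nat) (tau : algC).

Definition letter_mx (l : letter) : 'M[algC]_3 :=
  match l with
  | lR1 => R1 p tau | lR1inv => invmx (R1 p tau) | lJ => Jm | lJinv => invmx Jm
  end.

Definition word_mx (w : seq letter) : 'M[algC]_3 := foldr (fun l M => letter_mx l *m M) 1%:M w.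

Lemma Gam_word_mx w : Gam p tau (word_mx w).
Proof.
elim: w => [|l w IH] /=; first exact: gen_one.
apply: gen_mul IH; case: l => /=; do ?apply: gen_inv; apply: gen_in; by [left | right].
Qed.

Lemma word_mx_cat w1 w2 : word_mx (w1 ++ w2) = word_mx w1 *m word_mx w2.
Proof. by elim: w1 => [|l w1 IH] /=; rewrite ?mul1mx // IH mulmxA. Qed.

Lemma word_mx_pow w k : word_mx (flatten (nseq k w)) = word_mx w ^+ k.
Proof. by elim: k => [|k IH]; rewrite ?expr0 // exprS /= word_mx_cat IH mulmxE. Qed.

Definition R2_word := [:: lJ; lR1; lJinv].
Definition R3_word := [:: lJ; lJ; lR1; lJinv; lJinv].
Definition R2inv_word := [:: lJ; lR1inv; lJinv].
Definition R3inv_word := [:: lJ; lJ; lR1inv; lJinv; lJinv].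

Lemma word_mx_R2 : word_mx R2_word = R2 p tau.
Proof. by rewrite /= mulmx1 !mulmxA. Qed.

Lemma word_mx_R3 : word_mx R3_word = R3 p tau.
Proof. by rewrite /= mulmx1 /R3 /R2 !mulmxA. Qed.

Lemma word_mx_R2inv : word_mx R2inv_word = invmx (R2 p tau).
Proof. by rewrite /R2 invmx_conj ?Jm_unit //= mulmx1 !mulmxA. Qed.

Lemma word_mx_R3inv : word_mx R3inv_word = invmx (R3 p tau).
Proof.
by rewrite /R3 invmx_conj ?Jm_unit // -word_mx_R2inv /= mulmx1 !mulmxA.
Qed.

End Words.

Definition A12_word := flatten (nseq 5 (lR1 :: R2_word)).
Definition A13_word := flatten (nseq 5 (lR1 :: R3_word)).
Definition A1232_word := flatten (nseq 3 (lR1 :: R2_word ++ R3_word ++ R2inv_word)).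
Definition A1323_word := flatten (nseq 3 (lR1 :: R3inv_word ++ R2_word ++ R3_word)).

Section RelationWords.
Variables (p : nat) (tau : algC).
Local Notation R1 := (R1 p tau).
Local Notation R2 := (R2 p tau).
Local Notation R3 := (R3 p tau).
Local Notation word_mx := (word_mx p tau).

Lemma word_mx_A12 : word_mx A12_word = (R1 *m R2) ^+ 5.
Proof. by rewrite word_mx_pow (word_mx_cat _ _ [:: lR1]) word_mx_R2 /= mulmx1. Qed.

Lemma word_mx_A13 : word_mx A13_word = (R1 *m R3) ^+ 5.
Proof. by rewrite word_mx_pow (word_mx_cat _ _ [:: lR1]) word_mx_R3 /= mulmx1. Qed.

Lemma word_mx_A1232 : word_mx A1232_word = (R1 *m R2 *m R3 *m invmx R2) ^+ 3.
Proof.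
rewrite word_mx_pow (word_mx_cat _ _ [:: lR1]) !word_mx_cat word_mx_R2 word_mx_R3 word_mx_R2inv.
by rewrite /= mulmx1 !mulmxA.
Qed.

Lemma word_mx_A1323 : word_mx A1323_word = (R1 *m invmx R3 *m R2 *m R3) ^+ 3.
Proof.
rewrite word_mx_pow (word_mx_cat _ _ [:: lR1]) !word_mx_cat word_mx_R2 word_mx_R3 word_mx_R3inv.
by rewrite /= mulmx1 !mulmxA.
Qed.

End RelationWords.

(** * Exact arithmetic in Z[phi][x]/(x^n + 1) *)

(* (a, b) stands for a + b phi, where phi ^ 2 = phi + 1. *)
Definition zphi := (Z * Z)%type.
Definition zphi0 : zphi := (0, 0).
Definition zphi1 : zphi := (1, 0).
Definition zphi_add (x y : zphi) : zphi := (x.1 + y.1, x.2 + y.2).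
Definition zphi_opp (x : zphi) : zphi := (- x.1, - x.2).
Definition zphi_mul (x y : zphi) : zphi :=
  (x.1 * y.1 + x.2 * y.2, x.1 * y.2 + x.2 * y.1 + x.2 * y.2).
Definition zphi_eq0 (x : zphi) : bool := (x.1 == 0) && (x.2 == 0).

(* Polynomials over Z[phi], lowest degree first. *)
Definition cpoly := seq zphi.

Fixpoint cpoly_add (x y : cpoly) : cpoly :=
  match x, y with
  | [::], _ => y
  | _, [::] => x
  | a :: x', b :: y' => zphi_add a b :: cpoly_add x' y'
  end.
Definition cpoly_opp : cpoly -> cpoly := map zphi_opp.
Definition cpoly_sub (x y : cpoly) : cpoly := cpoly_add x (cpoly_opp y).
Definition cpoly_scale (a : zphi) : cpoly -> cpoly := map (zphi_mul a).
Definition cpoly_monomial (k : nat) (a : zphi) : cpoly := rcons (nseq k zphi0) a.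
Definition one_cpoly : cpoly := [:: zphi1].
Definition phi_cpoly : cpoly := [:: (0, 1)].
Definition cpoly_eq0 : cpoly -> bool := all zphi_eq0.

Section ModuloXnPlus1.
Variable n : nat.

Definition cpoly_mulX (x : cpoly) : cpoly :=
  let y := zphi0 :: x in
  if (size y <= n)%N then y else cpoly_sub (take n y) (drop n y).

Definition cpoly_mul (x y : cpoly) : cpoly :=
  foldr (fun a z => cpoly_add (cpoly_scale a y) (cpoly_mulX z)) [::] x.

(* x^-1 = - x^(n-1) modulo x^n + 1 *)
Definition cpoly_mulXinv (x : cpoly) : cpoly :=
  if x is a :: x' then cpoly_sub x' (cpoly_monomial n.-1 a) else [::].

Definition cpoly_conj : cpoly -> cpoly :=
  foldr (fun a z => cpoly_add [:: a] (cpoly_mulXinv z)) [::].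

Definition cpoly_eqmod (G x y : cpoly) : bool := cpoly_eq0 (cpoly_mul (cpoly_sub x y) G).

End ModuloXnPlus1.

Section Evaluation.
Variables (phi : algC) (n : nat) (r : algC).
Hypotheses (phi2 : phi ^+ 2 = phi + 1) (phi_real : phi \is Num.real) (rn : r ^+ n = -1).

Definition zphi_eval (a : zphi) : algC := (int_of_Z a.1)%:~R + (int_of_Z a.2)%:~R * phi.

Lemma zphi_eval0 : zphi_eval zphi0 = 0.
Proof. by rewrite /zphi_eval /= mul0r addr0. Qed.

Lemma zphi_eval1 : zphi_eval zphi1 = 1.
Proof. by rewrite /zphi_eval /= mul0r addr0. Qed.

Lemma zphi_evalD a b : zphi_eval (zphi_add a b) = zphi_eval a + zphi_eval b.
Proof. rewrite /zphi_eval /= !rmorphD /=; ring. Qed.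

Lemma zphi_evalN a : zphi_eval (zphi_opp a) = - zphi_eval a.
Proof. rewrite /zphi_eval /= !rmorphN /=; ring. Qed.

Lemma zphi_evalM a b : zphi_eval (zphi_mul a b) = zphi_eval a * zphi_eval b.
Proof.
rewrite /zphi_eval /= !rmorphD !rmorphM /=.
move: (int_of_Z a.1)%:~R (int_of_Z a.2)%:~R (int_of_Z b.1)%:~R (int_of_Z b.2)%:~R => a1 a2 b1 b2.
transitivity (a1 * b1 + a2 * b2 * (phi + 1) + (a1 * b2 + a2 * b1) * phi : algC); first by ring.
by rewrite -phi2; ring.
Qed.

Lemma zphi_eval_conj a : (zphi_eval a)^* = zphi_eval a.
Proof. by apply/CrealP; rewrite rpredD ?rpredM ?realz. Qed.

Definition cpoly_eval : cpoly -> algC := foldr (fun a v => zphi_eval a + r * v) 0.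

Lemma cpoly_eval_cons a x : cpoly_eval (a :: x) = zphi_eval a + r * cpoly_eval x.
Proof. by []. Qed.

Lemma cpoly_eval_one : cpoly_eval one_cpoly = 1.
Proof. by rewrite /= zphi_eval1 mulr0 addr0. Qed.

Lemma cpoly_eval_phi : cpoly_eval phi_cpoly = phi.
Proof. by rewrite /= /zphi_eval /= mulr0 !addr0 mul1r add0r. Qed.

Lemma cpoly_evalD x y : cpoly_eval (cpoly_add x y) = cpoly_eval x + cpoly_eval y.
Proof.
elim: x y => [|a x IH] [|b y] /=; rewrite ?add0r ?addr0 //.
by rewrite IH zphi_evalD; ring.
Qed.

Lemma cpoly_evalN x : cpoly_eval (cpoly_opp x) = - cpoly_eval x.
Proof. by elim: x => [|a x IH] /=; rewrite ?oppr0 // IH zphi_evalN; ring. Qed.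

Lemma cpoly_evalB x y : cpoly_eval (cpoly_sub x y) = cpoly_eval x - cpoly_eval y.
Proof. by rewrite cpoly_evalD cpoly_evalN. Qed.

Lemma cpoly_evalZ a x : cpoly_eval (cpoly_scale a x) = zphi_eval a * cpoly_eval x.
Proof. by elim: x => [|b x IH] /=; rewrite ?mulr0 // IH zphi_evalM; ring. Qed.

Lemma cpoly_eval_monomial k a : cpoly_eval (cpoly_monomial k a) = r ^+ k * zphi_eval a.
Proof.
elim: k => [|k IH] /=; first by rewrite mulr0 addr0 mul1r.
by rewrite IH zphi_eval0 add0r exprS mulrA.
Qed.

Lemma cpoly_eval_take_drop k x :
  cpoly_eval x = cpoly_eval (take k x) + r ^+ k * cpoly_eval (drop k x).
Proof.
elim: k x => [|k IH] [|a x] /=; rewrite ?mul1r ?mulr0 ?add0r ?addr0 //.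
by rewrite [in LHS]IH exprS; ring.
Qed.

Lemma cpoly_eval_mulX x : cpoly_eval (cpoly_mulX n x) = r * cpoly_eval x.
Proof.
rewrite /cpoly_mulX; case: ifP => _ /=; first by rewrite zphi_eval0 add0r.
have := cpoly_eval_take_drop n (zphi0 :: x); rewrite /= zphi_eval0 add0r rn => ->.
by rewrite cpoly_evalB; ring.
Qed.

Lemma cpoly_evalM x y : cpoly_eval (cpoly_mul n x y) = cpoly_eval x * cpoly_eval y.
Proof.
by elim: x => [|a x IH] /=; rewrite ?mul0r // cpoly_evalD cpoly_evalZ cpoly_eval_mulX IH; ring.
Qed.

Lemma expr_eqN1_gt0 : (0 < n)%N.
Proof. by case: n rn => // /eqP; rewrite expr0 -addr_eq0 (eqC_nat 2 0). Qed.

Lemma root_conj : r^* = - r ^+ n.-1.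
Proof.
have r1 : `|r| = 1.
  by apply/eqP; rewrite -(pexpr_eq1 expr_eqN1_gt0) // -normrX rn normrN normr1.
have rrc : r * r^* = 1 by rewrite -normCK r1 expr1n.
have rrn : r * - r ^+ n.-1 = 1 by rewrite mulrN -exprS prednK ?expr_eqN1_gt0 // rn opprK.
have r0 : r != 0 by rewrite -normr_eq0 r1 oner_eq0.
by apply: (mulfI r0); rewrite rrc rrn.
Qed.

Lemma cpoly_eval_mulXinv x : cpoly_eval (cpoly_mulXinv n x) = r^* * cpoly_eval x.
Proof.
case: x => [|a x] /=; first by rewrite mulr0.
have rn' : r ^+ n.-1 * r = -1 by rewrite -exprSr prednK ?expr_eqN1_gt0.
rewrite cpoly_evalB cpoly_eval_monomial root_conj.
transitivity (- (r ^+ n.-1 * r) * cpoly_eval x - r ^+ n.-1 * zphi_eval a); last by ring.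
by rewrite rn'; ring.
Qed.

Lemma cpoly_eval_conj x : cpoly_eval (cpoly_conj n x) = (cpoly_eval x)^*.
Proof.
elim: x => [|a x IH]; first by rewrite /= rmorph0.
rewrite (_ : cpoly_conj n _ = cpoly_add [:: a] (cpoly_mulXinv n (cpoly_conj n x))) //.
rewrite cpoly_evalD cpoly_eval_mulXinv IH !cpoly_eval_cons mulr0 addr0.
by rewrite rmorphD rmorphM /= zphi_eval_conj mulrC.
Qed.

Lemma cpoly_eval_eq0 x : cpoly_eq0 x -> cpoly_eval x = 0.
Proof.
elim: x => [|[a1 a2] x IH] //= /andP[/andP[/eqP /= -> /eqP /= ->] /IH ->].
by rewrite zphi_eval0 mulr0 addr0.
Qed.

Lemma cpoly_eval_eqmod G x y :
  cpoly_eval G != 0 -> cpoly_eqmod n G x y -> cpoly_eval x = cpoly_eval y.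
Proof.
move=> G0 /cpoly_eval_eq0 /eqP; rewrite cpoly_evalM cpoly_evalB mulf_eq0 (negbTE G0) orbF.
by rewrite subr_eq0 => /eqP.
Qed.

End Evaluation.

Inductive cmx := CMx of cpoly & cpoly & cpoly & cpoly & cpoly & cpoly & cpoly & cpoly & cpoly.

Definition cmx1 : cmx := CMx one_cpoly [::] [::] [::] one_cpoly [::] [::] [::] one_cpoly.

Section MatricesModuloXnPlus1.
Variable n : nat.

Definition cpoly_dot3 (x1 x2 x3 y1 y2 y3 : cpoly) : cpoly :=
  cpoly_add (cpoly_mul n x1 y1) (cpoly_add (cpoly_mul n x2 y2) (cpoly_mul n x3 y3)).

Definition cmx_mul (X Y : cmx) : cmx :=
  let: CMx a b c d e f g h k := X in
  let: CMx a' b' c' d' e' f' g' h' k' := Y in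
  CMx (cpoly_dot3 a b c a' d' g') (cpoly_dot3 a b c b' e' h') (cpoly_dot3 a b c c' f' k')
      (cpoly_dot3 d e f a' d' g') (cpoly_dot3 d e f b' e' h') (cpoly_dot3 d e f c' f' k')
      (cpoly_dot3 g h k a' d' g') (cpoly_dot3 g h k b' e' h') (cpoly_dot3 g h k c' f' k').

Definition cmx_adj (X : cmx) : cmx :=
  let: CMx a b c d e f g h k := X in
  let cj := cpoly_conj n in
  CMx (cj a) (cj d) (cj g) (cj b) (cj e) (cj h) (cj c) (cj f) (cj k).

Definition cmx_scale (s : cpoly) (X : cmx) : cmx :=
  let: CMx a b c d e f g h k := X in
  let sc := cpoly_mul n s in
  CMx (sc a) (sc b) (sc c) (sc d) (sc e) (sc f) (sc g) (sc h) (sc k).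

Definition cmx_eqmod (G : cpoly) (X Y : cmx) : bool :=
  let: CMx a b c d e f g h k := X in
  let: CMx a' b' c' d' e' f' g' h' k' := Y in
  let eq := cpoly_eqmod n G in
  [&& eq a a', eq b b', eq c c', eq d d', eq e e', eq f f', eq g g', eq h h' & eq k k'].

End MatricesModuloXnPlus1.

Section MatrixEvaluation.
Variables (phi : algC) (n : nat) (r : algC).
Hypotheses (phi2 : phi ^+ 2 = phi + 1) (phi_real : phi \is Num.real) (rn : r ^+ n = -1).
Local Notation ev := (cpoly_eval phi r).

Definition cmx_eval (X : cmx) : 'M[algC]_3 :=
  let: CMx a b c d e f g h k := X in
  mx3 (ev a) (ev b) (ev c) (ev d) (ev e) (ev f) (ev g) (ev h) (ev k).

Lemma cmx_evalE a b c d e f g h k :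
  cmx_eval (CMx a b c d e f g h k) =
  mx3 (ev a) (ev b) (ev c) (ev d) (ev e) (ev f) (ev g) (ev h) (ev k).
Proof. by []. Qed.

Lemma cmx_eval1 : cmx_eval cmx1 = 1%:M.
Proof. by rewrite -mx3_1 cmx_evalE cpoly_eval_one. Qed.

Lemma cmx_evalM X Y : cmx_eval (cmx_mul n X Y) = cmx_eval X *m cmx_eval Y.
Proof.
case: X => *; case: Y => *; rewrite /= mx3_mul.
by congr mx3; rewrite !cpoly_evalD !(cpoly_evalM phi2 rn) // addrA.
Qed.

Lemma cmx_eval_adj X : cmx_eval (cmx_adj n X) = adjmx (cmx_eval X).
Proof. by case: X => *; rewrite adjmx_mx3 /= !(cpoly_eval_conj phi_real rn). Qed.

Lemma cmx_evalZ s X : cmx_eval (cmx_scale n s X) = ev s *: cmx_eval X.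
Proof. by case: X => *; rewrite scale_mx3 /= !(cpoly_evalM phi2 rn). Qed.

Lemma cmx_eval_eqmod G X Y : ev G != 0 -> cmx_eqmod n G X Y -> cmx_eval X = cmx_eval Y.
Proof.
move=> G0; case: X => a b c d e f g h k; case: Y => a' b' c' d' e' f' g' h' k'.
move=> /and5P[? ? ? ? /and5P[? ? ? ? ?]] /=.
by congr mx3; apply: (cpoly_eval_eqmod phi2 rn G0).
Qed.

End MatrixEvaluation.

(** * Certificates *)

Section Encoding.
Variables (n : nat) (tc : cpoly).
Local Notation mul := (cpoly_mul n).
Local Notation cj := (cpoly_conj n).

Definition u_cpoly : cpoly := cpoly_monomial 2 zphi1.
Definition ubar_cpoly : cpoly := cj u_cpoly.

Definition R1_cmx : cmx :=
  CMx (mul u_cpoly u_cpoly) tc (cpoly_opp (mul u_cpoly (cj tc)))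
      [::] ubar_cpoly [::]
      [::] [::] ubar_cpoly.

Definition R1inv_cmx : cmx :=
  let ub2 := mul ubar_cpoly ubar_cpoly in
  CMx ub2 (cpoly_opp (mul (mul tc ub2) u_cpoly)) (mul (mul (mul u_cpoly (cj tc)) ub2) u_cpoly)
      [::] u_cpoly [::]
      [::] [::] u_cpoly.

Definition J_cmx : cmx :=
  CMx [::] [::] one_cpoly one_cpoly [::] [::] [::] one_cpoly [::].

Definition Jinv_cmx : cmx :=
  CMx [::] one_cpoly [::] [::] [::] one_cpoly one_cpoly [::] [::].

Definition alpha_cpoly : cpoly :=
  cpoly_sub (cpoly_add one_cpoly one_cpoly)
    (cpoly_add (mul u_cpoly (mul u_cpoly u_cpoly)) (mul ubar_cpoly (mul ubar_cpoly ubar_cpoly))).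

Definition beta_cpoly : cpoly := mul (cpoly_sub (mul ubar_cpoly ubar_cpoly) u_cpoly) tc.

Definition H_cmx : cmx :=
  CMx alpha_cpoly beta_cpoly (cj beta_cpoly)
      (cj beta_cpoly) alpha_cpoly beta_cpoly
      beta_cpoly (cj beta_cpoly) alpha_cpoly.

Definition letter_cmx (l : letter) : cmx :=
  match l with lR1 => R1_cmx | lR1inv => R1inv_cmx | lJ => J_cmx | lJinv => Jinv_cmx end.

Definition word_cmx (w : seq letter) : cmx :=
  foldr (fun l M => cmx_mul n (letter_cmx l) M) cmx1 w.

(* Identities are tested after multiplication by G, so they need only hold at
   the roots of x^n + 1 where G does not vanish. *)
Definition certificate (G : cpoly) (A : seq letter) (ws : seq (seq letter)) (c : cpoly) :=
  let eq := cmx_eqmod n G in let mx := cmx_mul n in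
  let commute X Y := eq (mx X Y) (mx Y X) in
  let preserves_H X := eq (mx (mx (cmx_adj n X) H_cmx) X) H_cmx in
  let A_cmx := word_cmx A in
  [&& eq (mx R1_cmx R1inv_cmx) cmx1, preserves_H R1_cmx, preserves_H J_cmx,
      all (fun w => commute (word_cmx w) R1_cmx || commute (word_cmx w) A_cmx) ws &
      eq J_cmx (cmx_scale n c (foldr mx cmx1 (map word_cmx ws)))].

End Encoding.

Section Soundness.
Variables (p : nat) (phi tau : algC) (tc G : cpoly).
Let n := (3 * p)%N.
Let r := n.-root (-1 : algC).
Hypotheses (p_gt0 : (0 < p)%N) (phi2 : phi ^+ 2 = phi + 1) (phi_real : phi \is Num.real).
Hypotheses (tc_tau : cpoly_eval phi r tc = tau) (G_neq0 : cpoly_eval phi r G != 0).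
Local Notation ev := (cpoly_eval phi r).
Local Notation evM := (cmx_eval phi r).

Let rn : r ^+ n = -1.
Proof. by rewrite rootCK // muln_gt0. Qed.

Let evM_mul := cmx_evalM phi2 rn.
Let evM_eqmod X Y : cmx_eqmod n G X Y -> evM X = evM Y := cmx_eval_eqmod phi2 rn G_neq0.

Lemma cpoly_eval_u : ev u_cpoly = uu p.
Proof. by rewrite cpoly_eval_monomial zphi_eval1 mulr1. Qed.

Lemma cpoly_eval_ubar : ev (ubar_cpoly n) = ub p.
Proof. by rewrite (cpoly_eval_conj phi_real rn) cpoly_eval_u. Qed.

Lemma cmx_eval_R1 : evM (R1_cmx n tc) = R1 p tau.
Proof.
rewrite cmx_evalE cpoly_evalN !(cpoly_evalM phi2 rn) (cpoly_eval_conj phi_real rn).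
by rewrite cpoly_eval_u cpoly_eval_ubar tc_tau -expr2 -mulNr.
Qed.

Lemma cmx_eval_J : evM J_cmx = Jm.
Proof. by rewrite cmx_evalE cpoly_eval_one. Qed.

Lemma cmx_eval_Jinv : evM Jinv_cmx = invmx Jm.
Proof. by rewrite invmx_Jm cmx_evalE cpoly_eval_one. Qed.

Lemma cpoly_eval_alpha : ev (alpha_cpoly n) = alpha p.
Proof.
rewrite /alpha_cpoly cpoly_evalB 2!cpoly_evalD cpoly_eval_one !(cpoly_evalM phi2 rn).
by rewrite cpoly_eval_ubar cpoly_eval_u /alpha; ring.
Qed.

Lemma cpoly_eval_beta : ev (beta_cpoly n tc) = beta p tau.
Proof.
rewrite /beta_cpoly !(cpoly_evalM phi2 rn) cpoly_evalB (cpoly_evalM phi2 rn).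
by rewrite cpoly_eval_ubar cpoly_eval_u tc_tau -expr2.
Qed.

Lemma cmx_eval_H : evM (H_cmx n tc) = Hmat p tau.
Proof.
by rewrite cmx_evalE !(cpoly_eval_conj phi_real rn) cpoly_eval_alpha cpoly_eval_beta.
Qed.

Section R1Inverse.
Hypothesis R1inv_ok : cmx_eqmod n G (cmx_mul n (R1_cmx n tc) (R1inv_cmx n tc)) cmx1.

Lemma R1_mul_R1inv_cmx : R1 p tau *m evM (R1inv_cmx n tc) = 1%:M.
Proof. by rewrite -cmx_eval_R1 -evM_mul (evM_eqmod R1inv_ok) cmx_eval1. Qed.

Lemma cmx_eval_R1inv : evM (R1inv_cmx n tc) = invmx (R1 p tau).
Proof. exact/esym/invmx_mulmx1/R1_mul_R1inv_cmx. Qed.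

Lemma cmx_eval_word w : evM (word_cmx n tc w) = word_mx p tau w.
Proof.
elim: w => [|l w IH] /=; first exact: cmx_eval1.
rewrite evM_mul IH; congr (_ *m _); case: l => /=.
- exact: cmx_eval_R1.
- exact: cmx_eval_R1inv.
- exact: cmx_eval_J.
- exact: cmx_eval_Jinv.
Qed.

End R1Inverse.

Theorem certificate_sound A ws c :
  certificate n tc G A ws c -> ev c != 0 -> gen_by_mirror_stabs p tau (word_mx p tau A).
Proof.
case/and5P => R1inv_ok R1_H J_H ws_commute J_factor c_neq0.
have evW := cmx_eval_word R1inv_ok.
have H_unitary_of X : evM (cmx_mul n (cmx_mul n (cmx_adj n X) (H_cmx n tc)) X) =
    evM (H_cmx n tc) -> evM X \in unitmx -> H_unitary p tau (evM X).
  by rewrite !evM_mul (cmx_eval_adj phi_real rn) cmx_eval_H => XH uX; split.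
apply: (@gen_by_mirror_stabs_of_J_factorization p tau _ _ _ (map (word_mx p tau) ws) (ev c)) => //.
- rewrite -cmx_eval_R1; apply: H_unitary_of; first exact: evM_eqmod R1_H.
  by rewrite cmx_eval_R1; apply: (mulmx1_unit (R1_mul_R1inv_cmx R1inv_ok)).1.
- rewrite -cmx_eval_J; apply: H_unitary_of; first exact: evM_eqmod J_H.
  by rewrite cmx_eval_J Jm_unit.
- by move=> v /mapP[w _ ->]; apply: Gam_word_mx.
- move=> v /mapP[w /(allP ws_commute) /orP[] /evM_eqmod + ->];
    rewrite !evM_mul !evW ?cmx_eval_R1; by [left | right].
- rewrite -cmx_eval_J (evM_eqmod J_factor) (cmx_evalZ phi2 rn); congr (_ *: _).
  elim: ws {ws_commute J_factor} => [|w ws IH]; first exact: cmx_eval1.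
  by rewrite /= evM_mul evW IH.
Qed.

End Soundness.

(** * The golden ratio and the principal root of x^30 + 1 *)

Lemma sqrtC_natrM (b : nat) (x : algC) : 0 <= x -> b%:R * sqrtC x = sqrtC ((b ^ 2)%:R * x).
Proof. by move=> x_ge0; rewrite sqrtCM ?nnegrE ?ler0n // natrX sqrCK ?ler0n. Qed.

Lemma sqrtC_natr_ge (a b : nat) (x : algC) :
  0 <= x -> (a ^ 2)%:R <= (b ^ 2)%:R * x -> a%:R <= b%:R * sqrtC x.
Proof.
move=> x_ge0 le_ab; rewrite sqrtC_natrM // -[a%:R]sqrCK ?ler0n // -natrX.
by rewrite ler_sqrtC // nnegrE ?mulr_ge0 ?ler0n.
Qed.

Lemma sqrtC_natr_le (a b : nat) (x : algC) :
  0 <= x -> (b ^ 2)%:R * x <= (a ^ 2)%:R -> b%:R * sqrtC x <= a%:R.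
Proof.
move=> x_ge0 le_ba; rewrite sqrtC_natrM // -[a%:R]sqrCK ?ler0n // -natrX.
by rewrite ler_sqrtC // nnegrE ?mulr_ge0 ?ler0n.
Qed.

Lemma normr_expr_sub1 (z : algC) (k : nat) : `|z| = 1 -> `|z ^+ k - 1| <= k%:R * `|z - 1|.
Proof.
move=> z1; elim: k => [|k IH]; first by rewrite expr0 subrr normr0 mul0r.
have -> : z ^+ k.+1 - 1 = z * (z ^+ k - 1) + (z - 1) by rewrite exprS; ring.
apply: le_trans (ler_normD _ _) _.
by rewrite normrM z1 mul1r -addn1 natrD mulrDl mul1r lerD2r.
Qed.

Lemma sqr_normr_sub1 (z : algC) : `|z| = 1 -> `|z - 1| ^+ 2 = 2 - (z + z^*).
Proof.
move=> z1; have zz : z * z^* = 1 by rewrite -normCK z1 expr1n.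
rewrite normCK rmorphB /= rmorph1.
by transitivity (z * z^* - z - z^* + 1); [ring | rewrite zz; ring].
Qed.

Lemma fifth_root_trace (z : algC) :
  z ^+ 5 = 1 -> z != 1 -> (z + z ^+ 4) ^+ 2 + (z + z ^+ 4) - 1 = 0.
Proof.
move=> z5 z_neq1.
have cyclo : 1 + z + z ^+ 2 + z ^+ 3 + z ^+ 4 = 0.
  have : (z - 1) * (1 + z + z ^+ 2 + z ^+ 3 + z ^+ 4) = 0.
    by transitivity (z ^+ 5 - 1); [ring | rewrite z5 subrr].
  by move/eqP; rewrite mulf_eq0 subr_eq0 (negbTE z_neq1) => /eqP.
transitivity (1 + z + z ^+ 2 + z ^+ 3 + z ^+ 4 + (z ^+ 5 - 1) * (2 + z ^+ 3)); first by ring.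
by rewrite cyclo z5 subrr mul0r addr0.
Qed.

Lemma sigma10_ge0 : 0 <= sigma10.
Proof. by rewrite divr_ge0 ?ler0n // addr_ge0 ?ler01 ?sqrtC_ge0 ?ler0n. Qed.

Lemma sigma10_real : sigma10 \is Num.real.
Proof. exact: ger0_real sigma10_ge0. Qed.

Lemma sigma10_sqr : sigma10 ^+ 2 = sigma10 + 1.
Proof.
apply/eqP; rewrite -subr_eq0; apply/eqP.
transitivity ((sqrtC 5 ^+ 2 - 5) / 4 : algC); first by rewrite /sigma10; field.
by rewrite sqrtCK subrr mul0r.
Qed.

Lemma sigma10_lb : 161%:R <= 100%:R * sigma10.
Proof.
have -> : 100%:R * sigma10 = 50%:R + 50%:R * sqrtC 5 by rewrite /sigma10; field.
rewrite (_ : 161 = 50 + 111)%N // natrD lerD2l.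
by apply: sqrtC_natr_ge; rewrite ?ler0n // -natrM ler_nat.
Qed.

Lemma sigma10_ub : 100%:R * sigma10 <= 162%:R.
Proof.
have -> : 100%:R * sigma10 = 50%:R + 50%:R * sqrtC 5 by rewrite /sigma10; field.
rewrite (_ : 162 = 50 + 112)%N // natrD lerD2l.
by apply: sqrtC_natr_le; rewrite ?ler0n // -natrM ler_nat.
Qed.

Lemma three_sub_sigma10_ge0 : 0 <= 3 - sigma10.
Proof.
rewrite subr_ge0 -(ler_pM2l (_ : 0 < 100%:R)) ?ltr0n //.
by apply: le_trans sigma10_ub _; rewrite -natrM ler_nat.
Qed.

Local Notation s3 := (sqrtC 3 : algC).
Local Notation s3s := (sqrtC (3 - sigma10)).

Lemma sqrt3_lb : 173%:R <= 100%:R * s3.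
Proof. by apply: sqrtC_natr_ge; rewrite ?ler0n // -natrM ler_nat. Qed.

Lemma sqrt3s_lb : 117%:R <= 100%:R * s3s.
Proof.
apply: sqrtC_natr_ge; first exact: three_sub_sigma10_ge0.
rewrite mulrBr -natrM lerBrDr (_ : 100 ^ 2 = 100 * 100)%N // natrM -mulrA.
apply: le_trans (_ : 13689%:R + 100%:R * 162%:R <= _); first by rewrite lerD2l ler_pM2l ?sigma10_ub.
by rewrite -natrM -natrD ler_nat.
Qed.

(* e^(i pi/5) e^(-i pi/6) *)
Definition e30 : algC := (sigma10 + 'i * s3s) / 2 * ((s3 - 'i) / 2).

Lemma e30_rect : e30 = (sigma10 * s3 + s3s) / 4 + 'i * ((s3s * s3 - sigma10) / 4).
Proof.
apply/eqP; rewrite -subr_eq0; apply/eqP.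
transitivity (('i ^+ 2 + 1) * - s3s / 4); first by rewrite /e30; field.
by rewrite sqrCi addNr !mul0r.
Qed.

Lemma e30_pow30 : e30 ^+ 30 = -1.
Proof.
set v := (sigma10 + 'i * s3s) / 2; set w := (s3 - 'i) / 2.
have v_root : v ^+ 2 - sigma10 * v + 1 = 0.
  transitivity ((4 - sigma10 ^+ 2 + 'i ^+ 2 * s3s ^+ 2) / 4); first by rewrite /v; field.
  by rewrite sqrCi sqrtCK sigma10_sqr; field.
have v5 : v ^+ 5 = -1.
  apply/eqP; rewrite -addr_eq0; apply/eqP.
  transitivity ((v + 1) * (v ^+ 2 + (sigma10 - 1) * v + 1) * (v ^+ 2 - sigma10 * v + 1)
                + (sigma10 ^+ 2 - sigma10 - 1) * v ^+ 2 * (v + 1)); first by ring.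
  by rewrite v_root sigma10_sqr; ring.
have w3 : w ^+ 3 = - 'i.
  apply/eqP; rewrite -subr_eq0; apply/eqP.
  transitivity (((s3 ^+ 2 - 3) * (s3 - 3%:R * 'i) + ('i ^+ 2 + 1) * (3%:R * s3 - 'i)) / 8).
    by rewrite /w; field.
  by rewrite sqrCi sqrtCK !subrr addNr !mul0r addr0 mul0r.
rewrite /e30 -/v -/w exprMn (_ : 30 = 5 * 6)%N // (exprM v) v5 (_ : 5 * 6 = 3 * 10)%N //.
by rewrite (exprM w) w3 (_ : 10 = 2 * 5)%N // exprM sqrrN sqrCi; ring.
Qed.

Lemma e30_real_parts :
  (sigma10 * s3 + s3s) / 4 \is Num.real /\ (s3s * s3 - sigma10) / 4 \is Num.real.
Proof.
have [s3r s3sr] : s3 \is Num.real /\ s3s \is Num.real.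
  by split; rewrite sqrtC_real ?ler0n ?three_sub_sigma10_ge0.
split; apply: realM; rewrite ?realV ?realn //.
- by apply: realD => //; apply: realM sigma10_real s3r.
- by apply: realB sigma10_real; apply: realM.
Qed.

Lemma Im_e30_ge0 : 0 <= 'Im e30.
Proof.
have [r1 r2] := e30_real_parts.
rewrite e30_rect Im_rect // divr_ge0 ?ler0n // subr_ge0.
rewrite -(ler_pM2l (_ : 0 < 10000%:R)) ?ltr0n //.
apply: le_trans (_ : 100%:R * 162%:R <= _).
  by rewrite (_ : 10000 = 100 * 100)%N // natrM -mulrA ler_pM2l ?ltr0n ?sigma10_ub.
have -> : (10000%:R : algC) * (s3s * s3) = (100%:R * s3s) * (100%:R * s3).
  by rewrite (_ : 10000 = 100 * 100)%N // natrM; ring.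
apply: le_trans (_ : 117%:R * 173%:R <= _); first by rewrite -!natrM ler_nat.
by rewrite ler_pM ?ler0n ?sqrt3s_lb ?sqrt3_lb.
Qed.

Lemma Re_e30_lb : 39553%:R <= 40000%:R * 'Re e30.
Proof.
have [r1 r2] := e30_real_parts.
rewrite e30_rect Re_rect //.
have -> : 40000%:R * ((sigma10 * s3 + s3s) / 4) =
          (100%:R * sigma10) * (100%:R * s3) + 100%:R * (100%:R * s3s) :> algC.
  by rewrite (_ : 40000 = 100 * 100 * 4)%N // !natrM; field.
rewrite (_ : 39553 = 161 * 173 + 100 * 117)%N // natrD !natrM.
rewrite lerD ?ler_pM2l ?sqrt3s_lb ?ltr0n //.
by rewrite ler_pM ?ler0n ?sigma10_lb ?sqrt3_lb.
Qed.

Local Notation rho := (30.-root (-1) : algC).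

Lemma rho_pow30 : rho ^+ 30 = -1.
Proof. by rewrite rootCK. Qed.

Lemma norm_rho : `|rho| = 1.
Proof. by apply/eqP; rewrite -(pexpr_eq1 (_ : 0 < 30)%N) // -normrX rho_pow30 normrN normr1. Qed.

(* The principal root rho has the largest real part among the roots of X^30 + 1 in
   the upper half plane, so it is at least as close to 1 as e30. *)
Lemma rho_near1 : 20000%:R * `|rho - 1| ^+ 2 <= 447%:R.
Proof.
have Re_rho : 'Re e30 <= 'Re rho := rootC_Re_max (isT : (0 < 30)%N) e30_pow30 Im_e30_ge0.
rewrite sqr_normr_sub1 ?norm_rho // (_ : rho + rho^* = 2 * 'Re rho); last by rewrite ReE; field.
have -> : 20000%:R * (2 - 2 * 'Re rho) = 40000%:R - 40000%:R * 'Re rho :> algC.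
  by rewrite (_ : 40000 = 20000 * 2)%N // natrM; ring.
rewrite lerBlDr; apply: le_trans (_ : 447%:R + 39553%:R <= _).
  by rewrite -natrD ler_nat.
by rewrite lerD2l; apply: le_trans Re_e30_lb _; rewrite ler_pM2l ?ltr0n.
Qed.

Lemma rho_pow_near1 (k : nat) : 20000%:R * `|rho ^+ k - 1| ^+ 2 <= (k ^ 2 * 447)%:R.
Proof.
apply: le_trans (_ : 20000%:R * (k%:R * `|rho - 1|) ^+ 2 <= _).
  rewrite ler_pM2l ?ltr0n // lerXn2r ?nnegrE ?mulr_ge0 ?normr_ge0 ?ler0n //.
  exact: normr_expr_sub1 norm_rho.
rewrite exprMn mulrCA natrM natrX.
by apply: ler_wpM2l; rewrite ?exprn_ge0 ?ler0n ?rho_near1.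
Qed.

Lemma rho_expr_neqN1 (k : nat) : (k ^ 2 * 447 < 80000)%N -> rho ^+ k != -1.
Proof.
move=> k_small; apply/eqP => rho_k; have := rho_pow_near1 k; rewrite rho_k.
have -> : `|-1 - 1 : algC| ^+ 2 = 4%:R.
  by rewrite (_ : -1 - 1 = - 2%:R) ?normrN ?normr_nat -?natrX // -opprD.
by rewrite -natrM ler_nat leqNgt k_small.
Qed.

Lemma rho12_pow5 : (rho ^+ 12) ^+ 5 = 1.
Proof. by rewrite -exprM (exprM rho 30 2) rho_pow30 sqrrN expr1n. Qed.

Lemma rho12_neq1 : rho ^+ 12 != 1.
Proof.
apply: contra (@rho_expr_neqN1 6 isT) => /eqP rho12; apply/eqP.
have : rho ^+ 30 = rho ^+ 6 * (rho ^+ 12) ^+ 2 by rewrite -exprM -exprD.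
by rewrite rho12 expr1n mulr1 rho_pow30 => <-.
Qed.

(* rho^12 = e^(2 i pi/5), whose trace is 2 cos(2 pi/5) = sigma10 - 1 rather than the
   other root - sigma10 of X^2 + X - 1 since rho^12 is close to 1. *)
Lemma rho12_trace : rho ^+ 12 + (rho ^+ 12) ^+ 4 = sigma10 - 1.
Proof.
set z := rho ^+ 12; set s := z + z ^+ 4.
have z1 : `|z| = 1 by rewrite normrX norm_rho expr1n.
have s_conj : s = 2 - `|z - 1| ^+ 2.
  rewrite sqr_normr_sub1 // (_ : z^* = z ^+ 4); first by rewrite /s; ring.
  have z0 : z != 0 by rewrite -normr_eq0 z1 oner_eq0.
  by apply: (mulfI z0); rewrite -normCK z1 expr1n -exprS rho12_pow5.
have s_pos : 0 < s + sigma10.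
  rewrite -(pmulr_rgt0 _ (_ : 0 < 20000%:R)) ?ltr0n // s_conj.
  have -> : 20000%:R * (2 - `|z - 1| ^+ 2 + sigma10) =
            (40000%:R + 200%:R * (100%:R * sigma10)) - 20000%:R * `|z - 1| ^+ 2 :> algC.
    by rewrite (_ : 40000 = 20000 * 2)%N // (_ : 20000 = 200 * 100)%N // !natrM; ring.
  rewrite subr_gt0; apply: le_lt_trans (rho_pow_near1 12) _.
  apply: (@lt_le_trans _ _ (40000%:R + 200%:R * 161%:R)); first by rewrite -natrM -natrD ltr_nat.
  by rewrite lerD2l ler_pM2l ?ltr0n ?sigma10_lb.
have : (s - (sigma10 - 1)) * (s + sigma10) = 0.
  transitivity ((s ^+ 2 + s - 1) - (sigma10 ^+ 2 - sigma10 - 1)); first by ring.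
  by rewrite fifth_root_trace ?rho12_pow5 ?rho12_neq1 // sigma10_sqr; ring.
by move/eqP; rewrite mulf_eq0 (gt_eqF s_pos) orbF subr_eq0 => /eqP.
Qed.

(** * The certificates for p = 4, 5, 10 *)

(* The Y-words centralize R1, the others centralize A. *)
Definition X_word := [:: lR1inv; lJ; lR1inv; lJinv; lR1inv; lJ; lR1inv; lJinv].
Definition Y_word := [:: lJ; lR1; lJinv; lR1; lJ; lR1; lJinv; lR1; lJ].
Definition Z_word := [:: lJinv; lR1inv; lJ; lR1inv; lJinv; lR1inv; lJ; lR1inv].

Lemma certificate_A12_4 :
  certificate (3 * 4) phi_cpoly one_cpoly A12_word [:: X_word; Y_word] one_cpoly.
Proof. by vm_compute. Qed.

Lemma certificate_A13_4 :
  certificate (3 * 4) phi_cpoly one_cpoly A13_word [:: Y_word; Z_word] one_cpoly.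
Proof. by vm_compute. Qed.

Lemma certificate_A12_5 :
  certificate (3 * 5) phi_cpoly one_cpoly A12_word [:: X_word; Y_word] one_cpoly.
Proof. by vm_compute. Qed.

Lemma certificate_A13_5 :
  certificate (3 * 5) phi_cpoly one_cpoly A13_word [:: Y_word; Z_word] one_cpoly.
Proof. by vm_compute. Qed.

Definition tau10_cpoly : cpoly :=
  cpoly_add one_cpoly (cpoly_sub (cpoly_monomial 12 zphi1) (cpoly_monomial 18 zphi1)).
Definition one_add_X (k : nat) : cpoly := cpoly_add one_cpoly (cpoly_monomial k zphi1).
Definition G10_cpoly : cpoly :=
  cpoly_mul 30 (one_add_X 2) (cpoly_mul 30 (one_add_X 6) (one_add_X 10)).
Definition c10_cpoly : cpoly := cpoly_monomial 10 (zphi_opp zphi1).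

Definition Y1_word := [:: lJinv; lR1; lJ; lR1; lJinv; lR1; lJ; lR1; lJinv].
Definition Y2_word := [:: lR1; lJinv; lR1; lJ; lR1; lJinv; lR1; lJ; lR1; lJinv].
Definition X1_word := [:: lR1; lJ; lR1; lJ; lR1inv; lJinv; lR1inv; lJinv].
Definition X2_word := [:: lJ; lR1; lJinv; lR1; lJ; lR1; lJ; lR1inv].
Definition X3_word := [:: lR1inv; lJ; lR1; lJ; lR1; lJinv; lR1; lJ].
Definition X4_word := [:: lJinv; lR1inv; lJinv; lR1inv; lJ; lR1; lJ].

(* For p = 10, J itself centralizes (R1 R2)^5 and (R1 R3)^5. *)
Lemma certificate_A12_10 :
  certificate 30 tau10_cpoly G10_cpoly A12_word [:: [:: lJ]] one_cpoly.
Proof. by vm_compute. Qed.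

Lemma certificate_A13_10 :
  certificate 30 tau10_cpoly G10_cpoly A13_word [:: [:: lJ]] one_cpoly.
Proof. by vm_compute. Qed.

Lemma certificate_A1232_10 :
  certificate 30 tau10_cpoly G10_cpoly A1232_word
    [:: Y1_word; X1_word; Y1_word; X2_word] c10_cpoly.
Proof. by vm_compute. Qed.

Lemma certificate_A1323_10 :
  certificate 30 tau10_cpoly G10_cpoly A1323_word
    [:: X3_word; Y1_word; X4_word; Y2_word] c10_cpoly.
Proof. by vm_compute. Qed.

Lemma cpoly_eval_tau10 : cpoly_eval sigma10 rho tau10_cpoly = sigma10.
Proof.
rewrite cpoly_evalD cpoly_eval_one cpoly_evalB !cpoly_eval_monomial zphi_eval1 !mulr1.
have -> : rho ^+ 18 = - (rho ^+ 12) ^+ 4.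
  by rewrite -exprM (_ : 12 * 4 = 30 + 18)%N // exprD rho_pow30 mulN1r opprK.
by rewrite opprK rho12_trace; ring.
Qed.

Lemma cpoly_eval_G10 : cpoly_eval sigma10 rho G10_cpoly != 0.
Proof.
have ev_one_add_X k : cpoly_eval sigma10 rho (one_add_X k) = 1 + rho ^+ k.
  by rewrite cpoly_evalD cpoly_eval_one cpoly_eval_monomial zphi_eval1 mulr1.
rewrite !(cpoly_evalM sigma10_sqr rho_pow30) !ev_one_add_X.
by rewrite !mulf_neq0 // addrC addr_eq0; apply: rho_expr_neqN1.
Qed.

Lemma cpoly_eval_c10 : cpoly_eval sigma10 rho c10_cpoly != 0.
Proof.
rewrite cpoly_eval_monomial zphi_evalN zphi_eval1 mulrN1 oppr_eq0 expf_neq0 //.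
by rewrite -normr_eq0 norm_rho oner_eq0.
Qed.

Lemma gen_by_mirror_stabs_golden p A ws :
  certificate (3 * p) phi_cpoly one_cpoly A ws one_cpoly -> (0 < p)%N ->
  gen_by_mirror_stabs p sigma10 (word_mx p sigma10 A).
Proof.
move=> cert p_gt0; apply: (certificate_sound p_gt0 sigma10_sqr sigma10_real _ _ cert).
- exact: cpoly_eval_phi.
- by rewrite cpoly_eval_one oner_eq0.
- by rewrite cpoly_eval_one oner_eq0.
Qed.

Lemma gen_by_mirror_stabs_10 A ws c :
  cpoly_eval sigma10 rho c != 0 -> certificate 30 tau10_cpoly G10_cpoly A ws c ->
  gen_by_mirror_stabs 10 sigma10 (word_mx 10 sigma10 A).
Proof.
move=> c_neq0 cert.
exact: (certificate_sound (isT : 0 < 10)%N sigma10_sqr sigma10_real cpoly_eval_tau10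
          cpoly_eval_G10 cert c_neq0).
Qed.

Theorem theorem11p3 :
  (forall p : nat, p \in [:: 4%N; 5%N; 10%N] ->
    forall A : 'M[algC]_3,
      A = (R1 p sigma10 *m R2 p sigma10) ^+ 5 \/
      A = (R1 p sigma10 *m R3 p sigma10) ^+ 5 ->
      gen_by_mirror_stabs p sigma10 A) /\
  (forall A : 'M[algC]_3,
      A = (R1 10 sigma10 *m R2 10 sigma10 *m R3 10 sigma10 *m invmx (R2 10 sigma10)) ^+ 3 \/
      A = (R1 10 sigma10 *m invmx (R3 10 sigma10) *m R2 10 sigma10 *m R3 10 sigma10) ^+ 3 ->
      gen_by_mirror_stabs 10 sigma10 A).
Proof.
have one_neq0 : cpoly_eval sigma10 rho one_cpoly != 0 by rewrite cpoly_eval_one oner_eq0.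
split=> [p | A [] ->].
- rewrite !inE => /or3P[] /eqP-> A [] ->; rewrite -?word_mx_A12 -?word_mx_A13.
  + exact: gen_by_mirror_stabs_golden certificate_A12_4 isT.
  + exact: gen_by_mirror_stabs_golden certificate_A13_4 isT.
  + exact: gen_by_mirror_stabs_golden certificate_A12_5 isT.
  + exact: gen_by_mirror_stabs_golden certificate_A13_5 isT.
  + exact: gen_by_mirror_stabs_10 one_neq0 certificate_A12_10.
  + exact: gen_by_mirror_stabs_10 one_neq0 certificate_A13_10.
- by rewrite -word_mx_A1232; apply: gen_by_mirror_stabs_10 cpoly_eval_c10 certificate_A1232_10.
- by rewrite -word_mx_A1323; apply: gen_by_mirror_stabs_10 cpoly_eval_c10 certificate_A1323_10.
Qed.
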